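(* Let $A$ be an Archimedean semiprime $f$-algebra and let $A_b=\{a\in A: a^2\le\mu|a| \text{ for some }\mu\in(0,\infty)\}$. Then $A_b$ is simultaneously a subalgebra and an order ideal of $A$.
   Context: An $f$-algebra is a real associative algebra that is a vector lattice with $A_+A_+\subseteq A_+$ and such that $a\wedge b=0$ implies $ac\wedge b=ca\wedge b=0$ for all $c\in A_+$; it is semiprime if $0$ is its only nilpotent element. An order ideal is a solid vector subspace. *)

From HB Require Import structures.
From mathcomp Require Import all_boot all_order all_algebra.
From mathcomp Require Import reals.
Set Implicit Arguments. Unset Strict Implicit. Unset Printing Implicit Defensive.
Import Order.TTheory GRing.Theory Num.Theory.
Local Open Scope ring_scope.

Record falgebra (R : realType) (V : lmodType R) := FAlgebra {
  fle : V -> V -> Prop;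
  fjoin : V -> V -> V;
  fmeet : V -> V -> V;
  fmul : V -> V -> V;
  fle_refl : forall x, fle x x;
  fle_anti : forall x y, fle x y -> fle y x -> x = y;
  fle_trans : forall x y z, fle x y -> fle y z -> fle x z;
  fle_add : forall x y z, fle x y -> fle (x + z) (y + z);
  fle_scale : forall (c : R) x y, 0 <= c -> fle x y -> fle (c *: x) (c *: y);
  fjoin_ubl : forall x y, fle x (fjoin x y);
  fjoin_ubr : forall x y, fle y (fjoin x y);
  fjoin_lub : forall x y z, fle x z -> fle y z -> fle (fjoin x y) z;
  fmeet_lbl : forall x y, fle (fmeet x y) x;
  fmeet_lbr : forall x y, fle (fmeet x y) y;
  fmeet_glb : forall x y z, fle z x -> fle z y -> fle z (fmeet x y);
  fmulA : forall x y z, fmul x (fmul y z) = fmul (fmul x y) z;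
  fmulDl : forall x y z, fmul (x + y) z = fmul x z + fmul y z;
  fmulDr : forall x y z, fmul x (y + z) = fmul x y + fmul x z;
  fmulZl : forall (c : R) x y, fmul (c *: x) y = c *: fmul x y;
  fmulZr : forall (c : R) x y, fmul x (c *: y) = c *: fmul x y;
  fmul_ge0 : forall x y, fle 0 x -> fle 0 y -> fle 0 (fmul x y);
  fmeet0 : forall a b c, fmeet a b = 0 -> fle 0 c ->
     fmeet (fmul a c) b = 0 /\ fmeet (fmul c a) b = 0
}.

Section FAlgDefs.
Variables (R : realType) (V : lmodType R) (A : falgebra V).

Definition fabs (x : V) : V := fjoin A x (- x).

Definition archimedean_fa : Prop :=
  forall x y : V, fle A 0 x -> (forall n : nat, fle A (x *+ n) y) -> x = 0.

(* fpow x n = x^(n+1) *)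
Fixpoint fpow (x : V) (n : nat) : V :=
  match n with O => x | S k => fmul A x (fpow x k) end.

Definition nilpotent_fa (x : V) : Prop := exists n : nat, fpow x n = 0.

Definition semiprime_fa : Prop := forall x : V, nilpotent_fa x -> x = 0.

Definition vsubspace (S : V -> Prop) : Prop :=
  S 0 /\ (forall x y, S x -> S y -> S (x + y)) /\
  (forall (c : R) x, S x -> S (c *: x)).

Definition subalgebra_fa (S : V -> Prop) : Prop :=
  vsubspace S /\ (forall x y, S x -> S y -> S (fmul A x y)).

Definition order_ideal_fa (S : V -> Prop) : Prop :=
  vsubspace S /\ (forall x y, S y -> fle A (fabs x) (fabs y) -> S x).

Definition Ab (a : V) : Prop :=
  exists mu : R, 0 < mu /\ fle A (fmul A a a) (mu *: fabs a).

End FAlgDefs.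

From mathcomp Require Import all_boot all_order all_algebra.
From mathcomp Require Import reals.
Set Implicit Arguments. Unset Strict Implicit. Unset Printing Implicit Defensive.
Import Order.TTheory GRing.Theory Num.Theory.
Local Open Scope ring_scope.

(* Everything rests on one inequality of semiprime f-algebras: if 0 <= a,
   0 <= c and c^2 <= nu c, then ac <= nu a.  For z = ac - nu a one has
   zc = a(c^2 - nu c) <= 0, which forces z^+ c = 0; semiprimeness turns this
   into the disjointness of z^+ and c, hence (f-algebra property) of z^+ and
   ac, and since 0 <= z^+ <= ac, z^+ = 0.
   Consequently x lies in A_b as soon as |x| <= b for some b >= 0 with
   b^2 <= K b, because x^2 = |x|^2 <= |x| b <= K |x|.  Closure under sums,
   scalar multiples, products and solidity follows with b = |x| + |y|,
   |c| |x|, |x| |y| and |y| respectively. *)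

Section FAlgebraTheory.
Variables (R : realType) (V : lmodType R) (A : falgebra V).
Local Notation le := (fle A).
Local Notation mul := (fmul A).
Local Notation join := (fjoin A).
Local Notation meet := (fmeet A).
Local Notation abs := (fabs A).
Local Notation le_anti := (@fle_anti _ _ A).

Lemma fleD x y u v : le x y -> le u v -> le (x + u) (y + v).
Proof.
move=> lexy leuv; apply: (fle_trans (fle_add u lexy)).
by rewrite ![y + _]addrC; apply: fle_add.
Qed.

Lemma fsubr_ge0 x y : le 0 (y - x) <-> le x y.
Proof.
split=> h; first by have := fle_add x h; rewrite add0r subrK.
by rewrite -(subrr x); apply: fle_add.
Qed.

Lemma faddr_ge0 x y : le 0 x -> le 0 y -> le 0 (x + y).
Proof. by move=> x0 y0; rewrite -(addr0 0); apply: fleD. Qed.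

Lemma fscaler_ge0 (c : R) x : 0 <= c -> le 0 x -> le 0 (c *: x).
Proof. by move=> c0 x0; rewrite -(scaler0 _ c); apply: fle_scale. Qed.

Lemma fmul0r y : mul 0 y = 0.
Proof. by have := fmulZl A 0 0 y; rewrite !scale0r. Qed.

Lemma fmulr0 y : mul y 0 = 0.
Proof. by have := fmulZr A 0 y 0; rewrite !scale0r. Qed.

Lemma fmulNr x y : mul (- x) y = - mul x y.
Proof. by rewrite -scaleN1r fmulZl scaleN1r. Qed.

Lemma fmulrN x y : mul x (- y) = - mul x y.
Proof. by rewrite -scaleN1r fmulZr scaleN1r. Qed.

Lemma fmulrBl x y z : mul (x - y) z = mul x z - mul y z.
Proof. by rewrite fmulDl fmulNr. Qed.

Lemma fmulrBr x y z : mul z (x - y) = mul z x - mul z y.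
Proof. by rewrite fmulDr fmulrN. Qed.

Lemma fler_wpM2l a x y : le 0 a -> le x y -> le (mul a x) (mul a y).
Proof. by move=> a0 /fsubr_ge0 h; apply/fsubr_ge0; rewrite -fmulrBr; apply: fmul_ge0. Qed.

Lemma fler_wpM2r a x y : le 0 a -> le x y -> le (mul x a) (mul y a).
Proof. by move=> a0 /fsubr_ge0 h; apply/fsubr_ge0; rewrite -fmulrBl; apply: fmul_ge0. Qed.

Lemma fjoinC x y : join x y = join y x.
Proof.
by apply: le_anti; apply: fjoin_lub; first [apply: fjoin_ubr | apply: fjoin_ubl].
Qed.

Lemma fmeetC x y : meet x y = meet y x.
Proof.
by apply: le_anti; apply: fmeet_glb; first [apply: fmeet_lbr | apply: fmeet_lbl].
Qed.

Lemma fmeetxx x : meet x x = x.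
Proof. by apply: le_anti; [apply: fmeet_lbl | apply: fmeet_glb; apply: fle_refl]. Qed.

Lemma fjoinDr u v w : join (u + w) (v + w) = join u v + w.
Proof.
apply: le_anti.
  by apply: fjoin_lub; apply: fle_add; first [apply: fjoin_ubl | apply: fjoin_ubr].
rewrite -[X in le _ X](subrK w); apply: fle_add.
by apply: fjoin_lub; rewrite -[X in le X _](addrK w); apply: fle_add;
  first [apply: fjoin_ubl | apply: fjoin_ubr].
Qed.

Lemma fjoinZ (c : R) u v : 0 < c -> join (c *: u) (c *: v) = c *: join u v.
Proof.
move=> c0; have c'0 : 0 <= c^-1 by rewrite invr_ge0 ltW.
have scaleKV (w : V) : c^-1 *: (c *: w) = w by rewrite scalerA mulVf ?gt_eqF // scale1r.
have scaleVK (w : V) : c *: (c^-1 *: w) = w by rewrite scalerA divff ?gt_eqF // scale1r.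
apply: le_anti.
  by apply: fjoin_lub; apply: fle_scale (ltW c0) _; first [apply: fjoin_ubl | apply: fjoin_ubr].
rewrite -[X in le _ X]scaleVK; apply: fle_scale (ltW c0) _.
by apply: fjoin_lub; rewrite -[X in le X _]scaleKV; apply: fle_scale c'0 _;
  first [apply: fjoin_ubl | apply: fjoin_ubr].
Qed.

Lemma fmeet0_le_eq0 d u : le d u -> meet u d = 0 -> d = 0.
Proof.
move=> ledu meet0; apply: le_anti; last by rewrite -meet0; apply: fmeet_lbr.
by rewrite -meet0; apply: fmeet_glb (fle_refl _ _).
Qed.

Definition fpos z := join z 0.
Definition fneg z := join (- z) 0.

Lemma fpos_ge0 z : le 0 (fpos z). Proof. exact: fjoin_ubr. Qed.
Lemma fneg_ge0 z : le 0 (fneg z). Proof. exact: fjoin_ubr. Qed.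

Lemma fposE z : fpos z = fneg z + z.
Proof. by rewrite /fpos /fneg -fjoinDr addNr add0r fjoinC. Qed.

Lemma fposBneg z : fpos z - fneg z = z.
Proof. by rewrite fposE addrAC subrr add0r. Qed.

Lemma fposDneg z : fpos z + fneg z = abs z.
Proof.
have -> : fpos z + fneg z = fpos z *+ 2 - z by rewrite mulr2n -addrA fposE addrK.
rewrite -scaler_nat /fpos -fjoinZ ?ltr0n // scaler0 scaler_nat mulr2n.
by rewrite -fjoinDr addrK sub0r.
Qed.

Lemma fabs_ge0 z : le 0 (abs z).
Proof. by rewrite -fposDneg; apply: faddr_ge0; [apply: fpos_ge0 | apply: fneg_ge0]. Qed.

Lemma fle_abs z : le z (abs z). Proof. exact: fjoin_ubl. Qed.
Lemma fleN_abs z : le (- z) (abs z). Proof. exact: fjoin_ubr. Qed.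

Lemma fabsN z : abs (- z) = abs z.
Proof. by rewrite /fabs opprK fjoinC. Qed.

Lemma fabsD_le x y : le (abs (x + y)) (abs x + abs y).
Proof.
apply: fjoin_lub; first by apply: fleD; apply: fle_abs.
by rewrite opprD; apply: fleD; apply: fleN_abs.
Qed.

Lemma fabsZ_le (c : R) x : le (abs (c *: x)) (`|c| *: abs x).
Proof.
wlog c0 : c x / 0 <= c.
  move=> hwlog; have [/hwlog//|c_lt0] := leP 0 c.
  rewrite -[c *: x]opprK -scalerN -scaleNr -normrN -(fabsN x).
  by apply: hwlog; rewrite oppr_ge0 ltW.
rewrite ger0_norm //; apply: fjoin_lub; rewrite -?scalerN; apply: fle_scale c0 _.
  exact: fle_abs.
exact: fleN_abs.
Qed.

Lemma fmeet_pos_neg z : meet (fpos z) (fneg z) = 0.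
Proof.
set m := meet (fpos z) (fneg z).
have m0 : le 0 m by apply: fmeet_glb; [apply: fpos_ge0 | apply: fneg_ge0].
apply: le_anti => //.
have abs_le_join : le (abs z) (join (fpos z) (fneg z)).
  by apply: fjoin_lub;
    [apply: fle_trans (fjoin_ubl A _ _) | apply: fle_trans (fjoin_ubr A _ _)]; apply: fjoin_ubl.
have join_le : le (join (fpos z) (fneg z)) (fpos z + fneg z - m).
  apply: fjoin_lub; rewrite -addrA.
    rewrite -[X in le X _]addr0.
    by apply: fleD (fle_refl _ _) _; apply/fsubr_ge0/fmeet_lbr.
  rewrite addrCA -[X in le X _]addr0.
  by apply: fleD (fle_refl _ _) _; apply/fsubr_ge0/fmeet_lbl.
have := fle_trans abs_le_join join_le; rewrite fposDneg -[X in le X _]addr0.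
by move/fsubr_ge0; rewrite addr0 addrAC subrr add0r -sub0r => /fsubr_ge0.
Qed.

Lemma fmeet0_mulr p q c : meet p q = 0 -> le 0 c -> meet (mul p c) (mul q c) = 0.
Proof.
move=> pq0 c0; have [pcq0 _] := fmeet0 pq0 c0.
by rewrite fmeetC in pcq0; have [qcpc0 _] := fmeet0 pcq0 c0; rewrite fmeetC.
Qed.

Lemma fmeet0_mul p q : meet p q = 0 -> mul p q = 0.
Proof.
move=> pq0.
have p0 : le 0 p by rewrite -pq0; apply: fmeet_lbl.
have q0 : le 0 q by rewrite -pq0; apply: fmeet_lbr.
have [pqq0 _] := fmeet0 pq0 q0; rewrite fmeetC in pqq0.
by have [_ ] := fmeet0 pqq0 p0; rewrite fmeetxx.
Qed.

Lemma fsqr_abs z : mul (abs z) (abs z) = mul z z.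
Proof.
have pn0 := fmeet0_mul (fmeet_pos_neg z).
have np0 : mul (fneg z) (fpos z) = 0 by apply: fmeet0_mul; rewrite fmeetC fmeet_pos_neg.
rewrite -fposDneg -{5 6}(fposBneg z) !fmulrBl !fmulDl !fmulrBr !fmulDr pn0 np0.
by rewrite subr0 sub0r opprK addr0 add0r.
Qed.

Lemma fabs_mul_le x y : le (abs (mul x y)) (mul (abs x) (abs y)).
Proof.
have absBy : le 0 (abs y - y) by apply/fsubr_ge0/fle_abs.
have absDy : le 0 (abs y + y) by rewrite -{2}[y]opprK; apply/fsubr_ge0/fleN_abs.
have p0 := fpos_ge0 x; have n0 := fneg_ge0 x.
have -> : mul (abs x) (abs y) = mul (fpos x) (abs y) + mul (fneg x) (abs y).
  by rewrite -fmulDl fposDneg.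
have -> : mul x y = mul (fpos x) y - mul (fneg x) y by rewrite -fmulrBl fposBneg.
apply: fjoin_lub; apply/fsubr_ge0.
  rewrite opprB [_ - mul (fpos x) y]addrC addrACA -fmulrBr -fmulDr.
  by apply: faddr_ge0; apply: fmul_ge0.
rewrite opprK addrACA -fmulDr -fmulrBr.
by apply: faddr_ge0; apply: fmul_ge0.
Qed.

Lemma fpos_mul_eq0 z c : le 0 c -> le (mul z c) 0 -> mul (fpos z) c = 0.
Proof.
move=> c0 zc_le0; apply: (fmeet0_le_eq0 (u := mul (fneg z) c)).
  by have := fle_add (mul (fneg z) c) zc_le0; rewrite -{1}(fposBneg z) fmulrBl subrK add0r.
by apply: fmeet0_mulr c0; rewrite fmeetC fmeet_pos_neg.
Qed.

Section Semiprime.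
Hypothesis semiprimeA : semiprime_fa A.

Lemma fsqr_eq0 e : mul e e = 0 -> e = 0.
Proof. by move=> ee0; apply: semiprimeA; exists 1%N. Qed.

Lemma fmul_eq0_meet d c : le 0 d -> le 0 c -> mul d c = 0 -> meet d c = 0.
Proof.
move=> d0 c0 dc0; set e := meet d c.
have e0 : le 0 e by apply: fmeet_glb.
apply: fsqr_eq0; apply: le_anti; last exact: fmul_ge0.
rewrite -dc0; apply: fle_trans (_ : le _ (mul e c)) _.
  by apply: fler_wpM2l => //; apply: fmeet_lbr.
by apply: fler_wpM2r => //; apply: fmeet_lbl.
Qed.

Lemma fmulr_le_of_sqr_le a c (nu : R) : 0 <= nu -> le 0 a -> le 0 c ->
  le (mul c c) (nu *: c) -> le (mul a c) (nu *: a).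
Proof.
move=> nu0 a0 c0 cc_le; set z := mul a c - nu *: a.
have zc_le0 : le (mul z c) 0.
  have -> : mul z c = mul a (mul c c - nu *: c).
    by rewrite fmulrBl fmulrBr fmulZl fmulZr fmulA.
  rewrite -(fmulr0 a); apply: fler_wpM2l a0 _.
  by apply/fsubr_ge0; rewrite sub0r opprB; apply/fsubr_ge0.
have dc0 : meet (fpos z) c = 0.
  exact: fmul_eq0_meet (fpos_ge0 z) c0 (fpos_mul_eq0 c0 zc_le0).
have pos_z0 : fpos z = 0.
  apply: (fmeet0_le_eq0 (u := mul a c)).
    apply: fjoin_lub; last exact: fmul_ge0.
    by apply/fsubr_ge0; rewrite opprB addrC subrK; apply: fscaler_ge0.
  by rewrite fmeetC in dc0; have [_ ] := fmeet0 dc0 a0.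
apply/fsubr_ge0; rewrite -opprB -/z -(fposBneg z) pos_z0 sub0r opprK.
exact: fneg_ge0.
Qed.

Lemma Ab_sqr_abs x :
  Ab A x -> exists2 mu : R, 0 < mu & le (mul (abs x) (abs x)) (mu *: abs x).
Proof. by case=> mu [mu0 h]; exists mu; rewrite ?fsqr_abs. Qed.

Lemma Ab_of_abs_le b (K : R) x : 0 < K -> le 0 b -> le (mul b b) (K *: b) ->
  le (abs x) b -> Ab A x.
Proof.
move=> K0 b0 bb_le xb; exists K; split=> //; rewrite -fsqr_abs.
apply: fle_trans (_ : le _ (mul (abs x) b)) _.
  by apply: fler_wpM2l => //; apply: fabs_ge0.
by apply: fmulr_le_of_sqr_le => //; [apply: ltW | apply: fabs_ge0].
Qed.

Lemma Ab0 : Ab A 0.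
Proof. by exists 1; split=> //; rewrite fmul0r scale1r; apply: fabs_ge0. Qed.

Lemma AbD x y : Ab A x -> Ab A y -> Ab A (x + y).
Proof.
move=> /Ab_sqr_abs [mu mu0 xx_le] /Ab_sqr_abs [nu nu0 yy_le].
have x0 := fabs_ge0 x; have y0 := fabs_ge0 y.
apply: (Ab_of_abs_le (addr_gt0 mu0 nu0) (faddr_ge0 x0 y0) _ (fabsD_le x y)).
rewrite fmulDl !fmulDr scalerDr !scalerDl.
by apply: fleD; apply: fleD => //; apply: fmulr_le_of_sqr_le => //; apply: ltW.
Qed.

Lemma AbZ (c : R) x : Ab A x -> Ab A (c *: x).
Proof.
have [->|c_neq0] := eqVneq c 0; first by rewrite scale0r => _; apply: Ab0.
move=> /Ab_sqr_abs [mu mu0 xx_le]; have c0 : 0 < `|c| by rewrite normr_gt0.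
apply: (Ab_of_abs_le (mulr_gt0 c0 mu0) _ _ (fabsZ_le c x)).
  by apply: fscaler_ge0 (ltW c0) _; apply: fabs_ge0.
rewrite fmulZl fmulZr !scalerA mulrAC -!scalerA.
by apply: fle_scale; [apply: ltW | apply: fle_scale; [apply: ltW|]].
Qed.

Lemma AbM x y : Ab A x -> Ab A y -> Ab A (mul x y).
Proof.
move=> /Ab_sqr_abs [mu mu0 xx_le] /Ab_sqr_abs [nu nu0 yy_le].
have x0 := fabs_ge0 x; have y0 := fabs_ge0 y.
apply: (Ab_of_abs_le (mulr_gt0 mu0 nu0) (fmul_ge0 x0 y0) _ (fabs_mul_le x y)).
rewrite -fmulA (fmulA A (abs y)) -scalerA -!fmulZr; apply: (fler_wpM2l x0).
apply: fle_trans (_ : le _ (mul (mu *: abs y) (abs y))) _.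
  exact: fler_wpM2r y0 (fmulr_le_of_sqr_le (ltW mu0) y0 x0 xx_le).
by rewrite fmulZl; apply: fle_scale (ltW mu0) yy_le.
Qed.

Lemma Ab_solid x y : Ab A y -> le (abs x) (abs y) -> Ab A x.
Proof. by move=> /Ab_sqr_abs [mu mu0 yy_le]; apply: Ab_of_abs_le mu0 (fabs_ge0 y) yy_le. Qed.

End Semiprime.
End FAlgebraTheory.

Theorem theorem6 (R : realType) (V : lmodType R) (A : falgebra V) :
  archimedean_fa A -> semiprime_fa A ->
  subalgebra_fa A (Ab A) /\ order_ideal_fa A (Ab A).
Proof.
move=> _ semiprimeA.
have Ab_subspace : vsubspace (Ab A).
  by split; [apply: Ab0 | split; [apply: AbD | apply: AbZ]].
split; split=> //; first exact: AbM.
by move=> x y; apply: Ab_solid.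
Qed.
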